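(* Let $E$ be a real non-zero essential matrix and let $(R_a, R_b)$ be its twisted pair of rotations. Suppose that for some $\tau \in [-1,3]$, $$\frac{1}{2}(\tau^2 - 1)\operatorname{tr}(EE^{\mathrm T}) + (\tau + 1)\operatorname{tr}(E^2) - \tau\,(\operatorname{tr} E)^2 = 0.$$ Then $\tau = \operatorname{tr} R_a$ or $\tau = \operatorname{tr} R_b$.
   Context: For a 3-vector $a$, $[a]_\times$ denotes the $3\times 3$ skew-symmetric matrix with $[a]_\times b = a\times b$ for every $b$. An essential matrix is a matrix of the form $E = [t]_\times R$ with $R\in\mathrm{SO}(3)$ and $t\in\mathbb{R}^3$. For a real non-zero essential matrix $E$, the twisted pair of rotations is the pair $R_a, R_b \in \mathrm{SO}(3)$ defined as follows. Write $E = [t]_\times R_a$ with $t \neq 0$, and set $R_b = \left(\frac{2tt^{\mathrm T}}{\|t\|^2} - I\right) R_a$. Then $E \sim [t]_\times R_b$, where $\sim$ denotes equality up to a non-zero scalar factor. Moreover, $R_a$ and $R_b$ are exactly the rotations $R$ for which $E \sim [t']_\times R$ for some $t'\in\mathbb{R}^3$. *)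

(* Real numbers are modelled by an arbitrary real closed field. *)
From HB Require Import structures.
From mathcomp Require Import all_boot all_order all_algebra.
Set Implicit Arguments. Unset Strict Implicit. Unset Printing Implicit Defensive.
Import Order.TTheory GRing.Theory Num.Theory.
Local Open Scope ring_scope.

Section Defs.
Variable R : rcfType.

Definition v3 (a : 'cV[R]_3) (k : nat) : R := a (inord k) 0.

(* [a]_x : the skew-symmetric matrix with [a]_x b = a \times b *)
Definition skew (a : 'cV[R]_3) : 'M[R]_3 :=
  \matrix_(i < 3, j < 3)
    match nat_of_ord i, nat_of_ord j with
    | 0, 1 => - v3 a 2 | 0, 2 => v3 a 1
    | 1, 0 => v3 a 2   | 1, 2 => - v3 a 0
    | 2, 0 => - v3 a 1 | 2, 1 => v3 a 0
    | _, _ => 0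
    end.

Definition is_rot (Q : 'M[R]_3) : Prop := Q^T *m Q = 1%:M /\ \det Q = 1.

Definition sqnorm (t : 'cV[R]_3) : R := (t^T *m t) 0 0.

Definition twisted_pair (E Ra Rb : 'M[R]_3) : Prop :=
  exists t : 'cV[R]_3,
    [/\ t != 0, is_rot Ra, E = skew t *m Ra &
        Rb = ((2 / sqnorm t) *: (t *m t^T) - 1%:M) *m Ra].
End Defs.

(* Write s = |t|^2, c = tr Ra and q = t^T Ra t = tr (t t^T Ra) for E = [t]_x Ra.
   Then tr (E E^T) = 2 s, and (tr E)^2 - tr (E^2) = 2 tr (adj E) = 2 q because
   adj E = Ra^T t t^T.  Moving Ra across [t]_x (Ra [t]_x = [Ra t]_x Ra) and
   using [a]_x [b]_x = b a^T - (a . b) I gives E^2 = (Ra t t^T - q I) Ra^2, and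
   the Cayley-Hamilton relation Ra^2 = c Ra - c I + Ra^T of a rotation turns its
   trace into s + 2 c q - c^2 s.  Since tr Rb = 2 q / s - c, the hypothesis
   becomes (tau - c) (s (tau + c) - 2 q) = 0, whose roots are tr Ra and tr Rb. *)

From Pilot Require Import Defs.
From HB Require Import structures.
From mathcomp Require Import all_boot all_order all_algebra.
From mathcomp Require Import ring.
Set Implicit Arguments.
Unset Strict Implicit.
Unset Printing Implicit Defensive.

Import Order.TTheory GRing.Theory Num.Theory.
Local Open Scope ring_scope.

(* Literal ordinals, unlike the ring numerals of 'I_3, let [nat_of_ord] and
   hence the [match] defining [skew] compute. *)
Local Notation i0 := (@Ordinal 3 0 isT).
Local Notation i1 := (@Ordinal 3 1 isT).
Local Notation i2 := (@Ordinal 3 2 isT).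

Lemma ord3P (P : 'I_3 -> Prop) : P i0 -> P i1 -> P i2 -> forall i, P i.
Proof. by move=> P0 P1 P2 [[|[|[|//]]] hi]; rewrite (bool_irrelevance hi isT). Qed.

Lemma lift3E :
  ((lift i0 0 = i1) * (lift i0 1 = i2) * (lift i1 0 = i0) * (lift i1 1 = i2)
   * (lift i2 0 = i0) * (lift i2 1 = i1))%type.
Proof. by do !split; apply: val_inj. Qed.

Lemma inord3E : ((inord 0 = i0) * (inord 1 = i1) * (inord 2 = i2))%type.
Proof. by do !split; apply: val_inj; rewrite /= inordK. Qed.

Section Mx3.
Variable R : comNzRingType.

Lemma sum3E (F : 'I_3 -> R) : \sum_(i < 3) F i = F i0 + F i1 + F i2.
Proof.
rewrite !big_ord_recl big_ord0 addr0 addrA.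
by congr (F _ + F _ + F _); apply: val_inj.
Qed.

Lemma det_mx22 (B : 'M[R]_2) : \det B = B 0 0 * B 1 1 - B 0 1 * B 1 0.
Proof.
rewrite (expand_det_row B 0) !big_ord_recl big_ord0 /cofactor !det_mx11 !mxE /=.
have -> : lift (lift ord0 ord0) 0 = 0 :> 'I_2 by apply: val_inj.
have -> : lift 0 0 = 1 :> 'I_2 by apply: val_inj.
by rewrite /= expr1; ring.
Qed.

Lemma cofactor_mx3E (A : 'M[R]_3) i j : cofactor A i j = (-1) ^+ (i + j) *
  (A (lift i 0) (lift j 0) * A (lift i 1) (lift j 1)
   - A (lift i 0) (lift j 1) * A (lift i 1) (lift j 0)).
Proof. by rewrite /cofactor det_mx22 !mxE. Qed.

Lemma cayley_hamilton_mx3 (A : 'M[R]_3) :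
  \adj A = A *m A - \tr A *: A + \tr (\adj A) *: 1%:M.
Proof.
apply/matrixP; elim/ord3P; elim/ord3P;
  rewrite /mxtrace ?(mxE, sum3E, cofactor_mx3E, lift3E) /=; ring.
Qed.

Lemma sqr_mxtrace_mx3 (A : 'M[R]_3) :
  \tr A ^+ 2 = \tr (A *m A) + 2 * \tr (\adj A).
Proof.
have := congr1 mxtrace (cayley_hamilton_mx3 A).
rewrite raddfD raddfB /= !mxtraceZ mxtrace1 => h.
transitivity (\tr (A *m A) + 3 * \tr (\adj A)
              - (\tr (A *m A) - \tr A * \tr A + \tr (\adj A) * 3)); first by ring.
by rewrite -h; ring.
Qed.

Lemma adj_mulmx_mx3 (A B : 'M[R]_3) : \adj (A *m B) = \adj B *m \adj A.
Proof.
apply/matrixP; elim/ord3P; elim/ord3P;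
  rewrite ?(mxE, sum3E, cofactor_mx3E, lift3E) /=; ring.
Qed.
End Mx3.

(* The qualified name avoids the [skew] notation exported by sesquilinear. *)
Section Skew.
Variable R : rcfType.
Implicit Types a b : 'cV[R]_3.

Lemma skew_tr a : (Defs.skew a)^T = - Defs.skew a.
Proof.
apply/matrixP; elim/ord3P; elim/ord3P; rewrite !mxE /v3 ?inord3E /=; ring.
Qed.

Lemma skew_mulmx_skew a b :
  Defs.skew a *m Defs.skew b = b *m a^T - \tr (b *m a^T) *: 1%:M.
Proof.
apply/matrixP; elim/ord3P; elim/ord3P;
  rewrite /mxtrace ?(mxE, sum3E, big_ord1) /v3 ?inord3E /=; ring.
Qed.

Lemma adj_skew a : \adj (Defs.skew a) = a *m a^T.
Proof.
apply/matrixP; elim/ord3P; elim/ord3P;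
  rewrite ?(mxE, big_ord1, cofactor_mx3E, lift3E) /v3 ?inord3E /=; ring.
Qed.

Lemma skew_mulmx (A : 'M[R]_3) a :
  Defs.skew (A *m a) *m A = (\adj A)^T *m Defs.skew a.
Proof.
apply/matrixP; elim/ord3P; elim/ord3P;
  rewrite ?(mxE, sum3E, cofactor_mx3E, lift3E) /v3 ?inord3E ?(mxE, sum3E) /=;
  ring.
Qed.
End Skew.

Lemma mxtrace_mulmx_tr_eq0 (R : realDomainType) m n (A : 'M[R]_(m, n)) :
  \tr (A *m A^T) = 0 -> A = 0.
Proof.
move=> /eqP; rewrite /mxtrace psumr_eq0 => [/allP rowA0|i _]; last first.
  by rewrite mxE sumr_ge0 // => j _; rewrite mxE -expr2 sqr_ge0.
apply/matrixP => i j; rewrite mxE.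
have /implyP/(_ isT) := rowA0 i (mem_index_enum i).
rewrite mxE psumr_eq0 => [/allP/(_ j (mem_index_enum j))|k _]; last first.
  by rewrite mxE -expr2 sqr_ge0.
by rewrite mxE -expr2 sqrf_eq0 => /eqP.
Qed.

Section Rotation.
Variables (R : rcfType) (Q : 'M[R]_3).
Hypothesis Q_rot : is_rot Q.

Lemma rot_adj : \adj Q = Q^T.
Proof.
case: Q_rot => QtQ detQ.
by rewrite -[\adj Q]mul1mx -QtQ -mulmxA mul_mx_adj detQ mulmx1.
Qed.

Lemma rot_mulmx_tr : Q *m Q^T = 1%:M.
Proof. by case: Q_rot => QtQ _; apply: mulmx1C. Qed.

Lemma rot_sqr : Q *m Q = \tr Q *: Q - \tr Q *: 1%:M + Q^T.
Proof.
rewrite -rot_adj [in RHS]cayley_hamilton_mx3 rot_adj mxtrace_tr.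
by rewrite addrC -addrA [_ *: 1%:M + _]addrC subrK subrK.
Qed.

Lemma rot_skew a : Q *m Defs.skew a = Defs.skew (Q *m a) *m Q.
Proof. by rewrite skew_mulmx rot_adj trmxK. Qed.
End Rotation.

Section Essential.
Variables (R : rcfType) (t : 'cV[R]_3) (Q : 'M[R]_3).
Hypothesis Q_rot : is_rot Q.
Local Notation T := (t *m t^T).
Local Notation E := (Defs.skew t *m Q).

Lemma mxtrace_dyad_mulmx_tr (A : 'M[R]_3) : \tr (T *m A^T) = \tr (T *m A).
Proof. by rewrite -mxtrace_tr !trmx_mul !trmxK mxtrace_mulC. Qed.

Lemma sqnorm_mxtrace : sqnorm t = \tr T.
Proof. by rewrite /sqnorm -trace_mx11 mxtrace_mulC. Qed.

Lemma mxtrace_essential_mul_tr : \tr (E *m E^T) = 2 * \tr T.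
Proof.
rewrite trmx_mul -mulmxA (mulmxA Q) (rot_mulmx_tr Q_rot) mul1mx skew_tr mulmxN.
by rewrite skew_mulmx_skew raddfN raddfB /= mxtraceZ mxtrace1; ring.
Qed.

Lemma mxtrace_adj_essential : \tr (\adj E) = \tr (T *m Q).
Proof. by rewrite adj_mulmx_mx3 (rot_adj Q_rot) adj_skew mxtrace_mulC mxtrace_dyad_mulmx_tr. Qed.

Lemma mxtrace_essential_sqr :
  \tr (E *m E) = \tr T + 2 * \tr Q * \tr (T *m Q) - \tr Q ^+ 2 * \tr T.
Proof.
have E2 : E *m E = (Q *m T - \tr (T *m Q) *: 1%:M) *m (Q *m Q).
  rewrite -mulmxA (mulmxA Q) (rot_skew Q_rot) -!mulmxA mulmxA skew_mulmx_skew.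
  by rewrite -mulmxA mxtrace_mulC -mulmxA.
have trQTQ : \tr (Q *m T *m Q) = \tr Q * \tr (T *m Q) - \tr Q * \tr T + \tr (T *m Q).
  have -> : \tr (Q *m T *m Q) = \tr (T *m (Q *m Q)).
    by rewrite (mxtrace_mulC (Q *m T)) (mulmxA Q Q) mxtrace_mulC.
  rewrite (rot_sqr Q_rot) mulmxDr mulmxBr -!scalemxAr mulmx1 raddfD raddfB /= !mxtraceZ.
  by rewrite mxtrace_dyad_mulmx_tr.
have trQTQt : \tr (Q *m T *m Q^T) = \tr T.
  by case: Q_rot => QtQ _; rewrite (mxtrace_mulC (Q *m T)) (mulmxA Q^T) QtQ mul1mx.
rewrite E2 (rot_sqr Q_rot) mulmxBl -scalemxAl mul1mx.
rewrite !(mulmxDr, mulmxN) -!scalemxAr mulmx1 !(raddfD, raddfN) /= !mxtraceZ.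
by rewrite trQTQ trQTQt mxtrace1 mxtrace_tr (mxtrace_mulC Q T); ring.
Qed.

Lemma mxtrace_twisted :
  \tr (((2 / sqnorm t) *: T - 1%:M) *m Q) = 2 / sqnorm t * \tr (T *m Q) - \tr Q.
Proof. by rewrite mulmxBl mul1mx -scalemxAl raddfB /= mxtraceZ. Qed.
End Essential.

Lemma essential_quadratic_roots (F : numFieldType) (s c q tau : F) : s != 0 ->
  2^-1 * (tau ^+ 2 - 1) * (2 * s) + (tau + 1) * (s + 2 * c * q - c ^+ 2 * s)
    - tau * (s + 2 * c * q - c ^+ 2 * s + 2 * q) = 0 ->
  tau = c \/ tau = 2 / s * q - c.
Proof.
move=> s_neq0 h.
have : (tau - c) * (s * (tau + c) - 2 * q) = 0 by rewrite -h; field.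
move/eqP; rewrite mulf_eq0 => /orP[|]; rewrite subr_eq0 => /eqP e; first by left.
by right; apply: (mulfI s_neq0); rewrite mulrBr mulrA mulrCA divff // mulr1 -e; ring.
Qed.

Theorem proposition2 (R : rcfType) (E Ra Rb : 'M[R]_3) (tau : R) :
  E != 0 -> twisted_pair E Ra Rb ->
  -1 <= tau <= 3 ->
  2^-1 * (tau ^+ 2 - 1) * \tr (E *m E^T) + (tau + 1) * \tr (E *m E)
    - tau * (\tr E) ^+ 2 = 0 ->
  tau = \tr Ra \/ tau = \tr Rb.
Proof.
move=> _ [t [t_neq0 Ra_rot -> ->]] _.
have tt_neq0 : \tr (t *m t^T) != 0.
  by apply: contra_neq t_neq0; apply: mxtrace_mulmx_tr_eq0.
rewrite sqr_mxtrace_mx3 (mxtrace_adj_essential t Ra_rot).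
rewrite (mxtrace_essential_sqr t Ra_rot) (mxtrace_essential_mul_tr t Ra_rot).
by rewrite mxtrace_twisted sqnorm_mxtrace; apply: essential_quadratic_roots.
Qed.
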